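(* A coarse space $(X,\mathcal E)$ has $\operatorname{asdim}(X)\le n$ for some $n\in\omega$ if and only if for every entourage $\varepsilon\in\mathcal E$ there is an entourage $\delta\in\mathcal E$ such that for every finite set $F\subset X$ there is a coloring $\chi:F\to\{0,\dots,n\}$ such that every $\chi$-monochrome $\varepsilon$-chain $C\subset F$ satisfies $C\times C\subset\delta$.
   Context: A coarse space is a pair $(X,\mathcal E)$ of a set and a family of entourages $\varepsilon\subset X\times X$ that contain the diagonal, are symmetric, are (up to containment) closed under composition, and such that any symmetric $\delta$ with $\Delta_X\subset\delta\subset\varepsilon\in\mathcal E$ is in $\mathcal E$. $B(x,\varepsilon)=\{y:(x,y)\in\varepsilon\}$; $\operatorname{mesh}(\mathcal U)=\bigcup_{U\in\mathcal U}U\times U$. $\operatorname{asdim}(X)$ is the least $n\in\omega$ such that for every $\varepsilon\in\mathcal E$ there is a cover $\mathcal U$ of $X$ with $\operatorname{mesh}(\mathcal U)\subset\delta$ for some $\delta\in\mathcal E$ and each $B(x,\varepsilon)$ meeting at most $n+1$ members of $\mathcal U$ ($\infty$ if none). An $\varepsilon$-chain is a finite set $\{x_0,\dots,x_m\}$ with $(x_i,x_{i+1})\in\varepsilon$ for all $i<m$; it is $\chi$-monochrome if $\chi$ is constant on it. *)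

From Stdlib Require Import List Arith.
Import ListNotations.

Definition entourage (X : Type) := X -> X -> Prop.

Record coarse_space (X : Type) (E : entourage X -> Prop) : Prop := {
  cs_diag : forall e, E e -> forall x, e x x;
  cs_sym : forall e, E e -> forall x y, e x y -> e y x;
  cs_comp : forall e d, E e -> E d ->
    exists h, E h /\ forall x y z, e x y -> d y z -> h x z;
  cs_down : forall e d, E e -> (forall x, d x x) -> (forall x y, d x y -> d y x) ->
    (forall x y, d x y -> e x y) -> E d }.

Definition ball {X : Type} (x : X) (e : entourage X) : X -> Prop := fun y => e x y.

Definition is_cover {X : Type} (U : (X -> Prop) -> Prop) : Prop :=
  forall x, exists A, U A /\ A x.

Definition mesh_sub {X : Type} (U : (X -> Prop) -> Prop) (d : entourage X) : Prop :=
  forall A, U A -> forall x y, A x -> A y -> d x y.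

(* the set S meets at most k members of U (members counted up to extensional
   equality of sets) *)
Definition meets_at_most {X : Type} (U : (X -> Prop) -> Prop) (S : X -> Prop) (k : nat) : Prop :=
  exists s : list (X -> Prop), length s <= k /\
    forall A, U A -> (exists y, A y /\ S y) ->
      exists A', In A' s /\ forall z, A z <-> A' z.

Definition asdim_prop {X : Type} (E : entourage X -> Prop) (n : nat) : Prop :=
  forall e, E e -> exists U : (X -> Prop) -> Prop,
    is_cover U /\ (exists d, E d /\ mesh_sub U d) /\
    forall x, meets_at_most U (ball x e) (S n).

(* asdim(X) <= n, where asdim is the least n with asdim_prop (or infinity) *)
Definition asdim_le {X : Type} (E : entourage X -> Prop) (n : nat) : Prop :=
  exists m, m <= n /\ asdim_prop E m.

(* the list l = [x_0; ...; x_m] satisfies (x_i, x_{i+1}) in e for all i < m;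
   its set of elements is then an e-chain *)
Fixpoint is_chain {X : Type} (e : entourage X) (l : list X) : Prop :=
  match l with
  | x :: ((y :: _) as t) => e x y /\ is_chain e t
  | _ => True
  end.

(* Forward: given a cover U of multiplicity at most n+1 for the entourage
   e^(n+1), colour x by a radius k <= n at which the set of members of U meeting
   B(x, e^k) stops growing; such a k exists because that set can grow at most n
   times.  Along a monochrome e-chain of colour k this set is then constant, so
   any two points y, z of the chain are joined through a member of U containing
   z that meets B(y, e^k).
   Backward: a compactness argument (Zorn's lemma on partial colourings that
   extend to good colourings of every finite set) yields one colouring of all of
   X whose monochrome e^2-chains are uniformly bounded; the monochrome
   e^2-components then form a uniformly bounded cover, and a ball B(x, e) meets
   at most one component of each of the n+1 colours. *)

From Stdlib Require Import List Arith Lia ClassicalEpsilon Relations.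
From mathcomp Require classical_sets boolp.
Import ListNotations.

Definition good_coloring {X : Type} (e d : entourage X) (n : nat) (F : list X)
    (chi : X -> nat) : Prop :=
  (forall x, In x F -> chi x <= n) /\
  forall C : list X,
    (forall x, In x C -> In x F) ->
    is_chain e C ->
    (forall x y, In x C -> In y C -> chi x = chi y) ->
    forall x y, In x C -> In y C -> d x y.

Definition chain_colorable {X : Type} (E : entourage X -> Prop) (n : nat) : Prop :=
  forall e, E e -> exists d, E d /\ forall F : list X, exists chi, good_coloring e d n F chi.

Section Chains.
Variables (X : Type) (R : X -> X -> Prop).

Lemma is_chain_impl_in (R' : X -> X -> Prop) (l : list X) :
  (forall a b, In a l -> In b l -> R a b -> R' a b) -> is_chain R l -> is_chain R' l.
Proof.
induction l as [|a l IH]; [auto|]. destruct l as [|b l]; [auto|].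
intros Himp [Hab Hl]; split.
- apply Himp; simpl; auto.
- apply IH; auto. intros u v Hu Hv; apply Himp; simpl; auto.
Qed.

Lemma chain_head_clos_rst (a : X) (l : list X) :
  is_chain R (a :: l) -> forall z, In z (a :: l) -> clos_refl_sym_trans X R a z.
Proof.
revert a; induction l as [|b l IH]; intros a Hch z Hz.
- destruct Hz as [<-|[]]; apply rst_refl.
- destruct Hch as [Hab Hch]. destruct Hz as [<-|Hz].
  + apply rst_refl.
  + apply rst_trans with b; [apply rst_step; exact Hab | apply IH; auto].
Qed.

Lemma chain_clos_rst (l : list X) (x y : X) :
  is_chain R l -> In x l -> In y l -> clos_refl_sym_trans X R x y.
Proof.
destruct l as [|a l]; [intros _ []|].
intros Hch Hx Hy. apply rst_trans with a.
- apply rst_sym; apply (chain_head_clos_rst a l); auto.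
- apply (chain_head_clos_rst a l); auto.
Qed.

Lemma clos_rst_chain (R_sym : forall x y, R x y -> R y x) (a b : X) :
  clos_refl_sym_trans X R a b -> exists l, is_chain R (a :: l) /\ In b (a :: l).
Proof.
intro H; apply clos_rst_rst1n in H.
induction H as [x|x y z Hxy _ [l [Hch Hz]]].
- exists []; simpl; auto.
- exists (y :: l); split.
  + split; [destruct Hxy; auto | exact Hch].
  + right; exact Hz.
Qed.

End Chains.

Fixpoint rel_pow {X : Type} (e : entourage X) (k : nat) : entourage X :=
  match k with
  | 0 => fun x y => x = y
  | S k => fun x z => exists y, rel_pow e k x y /\ e y z
  end.

Section Powers.
Variables (X : Type) (e : entourage X).

Lemma rel_pow_S_l (k : nat) (a b c : X) :
  e a b -> rel_pow e k b c -> rel_pow e (S k) a c.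
Proof.
revert c; induction k as [|k IH]; intros c Hab Hbc.
- simpl in Hbc; subst c. exists a; split; [reflexivity | exact Hab].
- destruct Hbc as [y [Hby Hyc]]. exists y; split; [apply IH |]; assumption.
Qed.

Lemma rel_pow_le (e_refl : forall x, e x x) (k m : nat) (x y : X) :
  k <= m -> rel_pow e k x y -> rel_pow e m x y.
Proof.
induction 1 as [|m _ IH]; [auto|].
intro Hk; exists y; split; auto.
Qed.

End Powers.

Definition same_set {T : Type} (A B : T -> Prop) : Prop := forall z, A z <-> B z.

Fixpoint distinct_sets {T : Type} (L : list (T -> Prop)) : Prop :=
  match L with
  | [] => True
  | A :: L => (forall B, In B L -> ~ same_set A B) /\ distinct_sets L
  end.

Lemma distinct_sets_length {T : Type} (L s : list (T -> Prop)) :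
  distinct_sets L -> (forall A, In A L -> exists A', In A' s /\ same_set A A') ->
  length L <= length s.
Proof.
revert s; induction L as [|A L IH]; intros s HL' Hrep; simpl; [lia|].
destruct HL' as [HA HL].
destruct (Hrep A (or_introl eq_refl)) as [A' [HA' Heq]].
destruct (in_split _ _ HA') as [s1 [s2 ->]].
assert (length L <= length (s1 ++ s2)).
{ apply IH; auto. intros B HB. destruct (Hrep B (or_intror HB)) as [B' [HB' HBeq]].
  exists B'; split; auto.
  apply in_app_or in HB'; destruct HB' as [Hi|[<-|Hi]]; try (apply in_or_app; auto; fail).
  exfalso; apply (HA B HB). intro z; rewrite (Heq z), (HBeq z); tauto. }
rewrite length_app in *; simpl; lia.
Qed.

Lemma meets_at_most_distinct {X : Type} (U : (X -> Prop) -> Prop) (S : X -> Prop)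
    (k : nat) (L : list (X -> Prop)) :
  meets_at_most U S k -> distinct_sets L ->
  (forall A, In A L -> U A /\ exists y, A y /\ S y) -> length L <= k.
Proof.
intros [s [Hs Hrep]] HL HLU. eapply Nat.le_trans; [|exact Hs].
apply distinct_sets_length; auto.
intros A HA; destruct (HLU A HA); apply Hrep; auto.
Qed.

Definition meets_ball {X : Type} (U : (X -> Prop) -> Prop) (r : entourage X) (x : X)
    (A : X -> Prop) : Prop :=
  U A /\ exists y, A y /\ r x y.

Section Stabilization.
Variables (X : Type) (U : (X -> Prop) -> Prop) (e : entourage X).
Hypothesis U_cover : is_cover U.
Hypothesis e_refl : forall x, e x x.

Lemma meets_ball_grow (x : X) (j : nat) :
  (forall k, k < j -> exists A,
     meets_ball U (rel_pow e (S k)) x A /\ ~ meets_ball U (rel_pow e k) x A) ->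
  exists L, length L = S j /\ distinct_sets L /\
    forall A, In A L -> meets_ball U (rel_pow e j) x A.
Proof.
induction j as [|j IH]; intro Hnew.
- destruct (U_cover x) as [A [UA Ax]]. exists [A]; split; [reflexivity | split].
  + split; [intros B [] | exact I].
  + intros B [<-|[]]. split; auto. exists x; split; [exact Ax | reflexivity].
- destruct IH as [L [HL [Hdist HLm]]]; [intros k Hk; apply Hnew; lia|].
  destruct (Hnew j (Nat.lt_succ_diag_r j)) as [A [HA HnA]].
  exists (A :: L); split; [simpl; lia | split; [split; [|exact Hdist] |]].
  + intros B HB HAB. apply HnA. destruct (HLm B HB) as [UB [y [By Hxy]]].
    split; [apply HA |]. exists y; split; [apply HAB |]; assumption.
  + intros B [<-|HB]; [exact HA|]. destruct (HLm B HB) as [UB [y [By Hxy]]].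
    split; [exact UB|]. exists y; split; [exact By|]. apply rel_pow_le with j; auto.
Qed.

Lemma stable_radius_exists (x : X) (h : entourage X) (n m : nat) :
  m <= n -> (forall y z, rel_pow e (S n) y z -> h y z) ->
  meets_at_most U (ball x h) (S m) ->
  exists k, k <= n /\
    forall A, meets_ball U (rel_pow e (S k)) x A -> meets_ball U (rel_pow e k) x A.
Proof.
intros Hmn Hh Hmult. apply NNPP; intro Hnone.
destruct (meets_ball_grow x (S n)) as [L [HL [Hdist HLm]]].
{ intros k Hk. apply NNPP; intro Hstable. apply Hnone. exists k; split; [lia|].
  intros A HA. apply NNPP; intro HnA. apply Hstable; eauto. }
assert (length L <= S m); [|lia].
apply (meets_at_most_distinct U (ball x h)); auto.
intros A HA; destruct (HLm A HA) as [UA [y [Ay Hxy]]].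
split; [exact UA|]. exists y; split; [exact Ay | apply Hh; exact Hxy].
Qed.

End Stabilization.

Lemma meets_ball_step {X : Type} (U : (X -> Prop) -> Prop) (e : entourage X)
    (e_sym : forall x y, e x y -> e y x) (k : nat) (a b : X) (A : X -> Prop) :
  e a b -> meets_ball U (rel_pow e k) a A -> meets_ball U (rel_pow e (S k)) b A.
Proof.
intros Hab [UA [y [Ay Hay]]]. split; [exact UA|].
exists y; split; [exact Ay|]. apply rel_pow_S_l with a; auto.
Qed.

Lemma meets_ball_monochrome_invariant {X : Type} (U : (X -> Prop) -> Prop)
    (e : entourage X) (chi : X -> nat) (k : nat)
    (e_sym : forall x y, e x y -> e y x)
    (chi_stable : forall x A, meets_ball U (rel_pow e (S (chi x))) x A ->
                              meets_ball U (rel_pow e (chi x)) x A)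
    (a b : X) :
  clos_refl_sym_trans X (fun u v => e u v /\ chi u = k /\ chi v = k) a b ->
  same_set (meets_ball U (rel_pow e k) a) (meets_ball U (rel_pow e k) b).
Proof.
induction 1 as [u v [Huv [Hu Hv]]| u | u v _ IH | u v w _ IH1 _ IH2]; intro A.
- split; intro HA.
  + rewrite <- Hv. apply chi_stable. rewrite Hv. apply meets_ball_step with u; auto.
  + rewrite <- Hu. apply chi_stable. rewrite Hu. apply meets_ball_step with v; auto.
- tauto.
- specialize (IH A); tauto.
- specialize (IH1 A); specialize (IH2 A); tauto.
Qed.

Section Forward.
Variables (X : Type) (E : entourage X -> Prop).
Hypothesis cs : coarse_space X E.

Lemma rel_pow_within (e : entourage X) (k : nat) :
  E e -> exists h, E h /\ forall x y, rel_pow e k x y -> h x y.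
Proof.
intro He; induction k as [|k [h [Eh Hh]]].
- exists e; split; [exact He|]. intros x y ->; apply (cs_diag _ _ cs); auto.
- destruct (cs_comp _ _ cs h e Eh He) as [g [Eg Hg]].
  exists g; split; [exact Eg|]. intros x z [y [Hxy Hyz]]; eauto.
Qed.

Lemma chain_colorable_of_asdim_le (n : nat) : asdim_le E n -> chain_colorable E n.
Proof.
intros [m [Hmn Hasd]] e He.
assert (e_refl : forall x, e x x) by (apply (cs_diag _ _ cs); auto).
assert (e_sym : forall x y, e x y -> e y x) by (apply (cs_sym _ _ cs); auto).
destruct (rel_pow_within e (S n) He) as [h [Eh Hh]].
destruct (Hasd h Eh) as [U [Hcov [[d0 [Ed0 Hmesh]] Hmult]]].
destruct (rel_pow_within e n He) as [hn [Ehn Hhn]].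
destruct (cs_comp _ _ cs hn d0 Ehn Ed0) as [d [Ed Hd]].
destruct (choice (fun x k => k <= n /\ forall A,
            meets_ball U (rel_pow e (S k)) x A -> meets_ball U (rel_pow e k) x A))
  as [chi Hchi].
{ intro x. apply (stable_radius_exists X U e Hcov e_refl x h n m); auto. }
exists d; split; [exact Ed|]. intro F. exists chi; split; [intros x _; apply Hchi|].
intros C _ HC Hmono x y Hx Hy.
set (k := chi x).
assert (Hinv : same_set (meets_ball U (rel_pow e k) y) (meets_ball U (rel_pow e k) x)).
{ apply meets_ball_monochrome_invariant with chi; auto; [intros z A; apply Hchi|].
  apply chain_clos_rst with C; auto.
  apply is_chain_impl_in with e; auto.
  intros a b Ha Hb Hab; split; [exact Hab | split; apply Hmono; auto]. }
destruct (Hcov y) as [B [UB By]].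
destruct (proj1 (Hinv B)) as [_ [z [Bz Hxz]]].
{ split; [exact UB|]. exists y; split; [exact By|].
  apply rel_pow_le with 0; [auto | lia | reflexivity]. }
apply (Hd x z y).
- apply Hhn. apply rel_pow_le with k; auto. apply Hchi.
- apply (Hmesh B UB); auto.
Qed.

End Forward.

Definition family_union {T : Type} (Fam : (T -> Prop) -> Prop) : T -> Prop :=
  fun t => exists A, Fam A /\ A t.

Lemma zorn_union (T : Type) (P : (T -> Prop) -> Prop) :
  (forall Fam, (forall A, Fam A -> P A) ->
     (forall A B, Fam A -> Fam B -> (forall t, A t -> B t) \/ (forall t, B t -> A t)) ->
     P (family_union Fam)) ->
  exists A, P A /\ forall B, (forall t, A t -> B t) -> P B -> forall t, B t -> A t.
Proof.
intro Hchains.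
destruct (@classical_sets.Zorn_bigcup T P) as [A [PA HA]].
- intros Fam HFam Htot.
  replace (classical_sets.bigcup Fam (fun A => A)) with (family_union Fam).
  + apply Hchains; [exact HFam|]. intros A B FA FB; destruct (Htot A B FA FB); auto.
  + apply boolp.funext; intro t; apply boolp.propext; split.
    * intros [A [FA At]]; exists A; auto.
    * intros [A FA At]; exists A; auto.
- exists A; split; [exact PA|]. intros B AB PB.
  apply NNPP; intro HBA. apply (HA B); [split; auto | exact PB].
Qed.

Section Compactness.
Variables (X : Type) (n : nat) (Good : list X -> (X -> nat) -> Prop).
Hypothesis Good_incl : forall F F' chi, incl F F' -> Good F' chi -> Good F chi.
Hypothesis Good_local : forall F chi chi',
  (forall x, In x F -> chi x = chi' x) -> Good F chi -> Good F chi'.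
Hypothesis Good_bounded : forall F chi x, Good F chi -> In x F -> chi x <= n.
Hypothesis Good_exists : forall F, exists chi, Good F chi.

(* Partial colourings are given by their graphs [A : X * nat -> Prop]. *)
Definition extendable (A : X * nat -> Prop) : Prop :=
  forall F, exists chi, Good F chi /\ forall x i, In x F -> A (x, i) -> chi x = i.

Lemma extendable_functional (A : X * nat -> Prop) (x : X) (i j : nat) :
  extendable A -> A (x, i) -> A (x, j) -> i = j.
Proof.
intros HA Hi Hj. destruct (HA [x]) as [chi [_ Hchi]].
transitivity (chi x); [symmetry|]; apply Hchi; simpl; auto.
Qed.

Section ChainUnion.
Variable Fam : (X * nat -> Prop) -> Prop.
Hypothesis Fam_extendable : forall A, Fam A -> extendable A.
Hypothesis Fam_total : forall A B, Fam A -> Fam B ->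
  (forall t, A t -> B t) \/ (forall t, B t -> A t).

Lemma member_contains_union_at (M : X * nat -> Prop) (x : X) (i j : nat) :
  Fam M -> M (x, j) -> family_union Fam (x, i) -> M (x, i).
Proof.
intros FM Mj [A [FA Ai]].
destruct (Fam_total A M FA FM) as [AM|MA]; [auto|].
replace i with j; [exact Mj|].
apply (extendable_functional A x); auto.
Qed.

Lemma union_agrees_on_list (L : list X) :
  exists M, (Fam M \/ forall t, ~ M t) /\
    forall x i, In x L -> family_union Fam (x, i) -> M (x, i).
Proof.
induction L as [|a L [M [HM HML]]].
- exists (fun _ => False); split; [right; auto | intros x i []].
- destruct (classic (exists i, family_union Fam (a, i))) as [[i0 [A0 [FA0 A0i]]]|Hnone].
  + assert (exists M', Fam M' /\ (forall t, M t -> M' t) /\ (forall t, A0 t -> M' t))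
      as [M' [FM' [MM' A0M']]].
    { destruct HM as [FM|Mempty].
      - destruct (Fam_total M A0 FM FA0) as [S|S]; [exists A0 | exists M]; auto.
      - exists A0; split; [exact FA0|]. split; [intros t Mt; destruct (Mempty t Mt)|auto]. }
    exists M'; split; [left; exact FM'|].
    intros x i [<-|Hx] Hu; [|auto].
    apply (member_contains_union_at M' a i i0); auto.
  + exists M; split; [exact HM|].
    intros x i [<-|Hx] Hu; [destruct Hnone; eauto | auto].
Qed.

Lemma union_extendable : extendable (family_union Fam).
Proof.
intro F. destruct (union_agrees_on_list F) as [M [HM HMF]].
destruct HM as [FM|Mempty].
- destruct (Fam_extendable M FM F) as [chi [Hg Hagree]].
  exists chi; split; [exact Hg|]. intros x i Hx Hu; apply Hagree; auto.
- destruct (Good_exists F) as [chi Hg].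
  exists chi; split; [exact Hg|]. intros x i Hx Hu; destruct (Mempty (x, i)); auto.
Qed.

End ChainUnion.

Definition add_point (A : X * nat -> Prop) (x0 : X) (k : nat) : X * nat -> Prop :=
  fun t => A t \/ t = (x0, k).

Definition refuted_on (A : X * nat -> Prop) (F : list X) : Prop :=
  forall chi, Good F chi -> (forall x i, In x F -> A (x, i) -> chi x = i) -> False.

Lemma refuted_on_incl (A : X * nat -> Prop) (F F' : list X) :
  incl F F' -> refuted_on A F -> refuted_on A F'.
Proof.
intros HF HA chi Hg Hagree. apply (HA chi); eauto.
Qed.

Lemma refuted_on_common (As : nat -> X * nat -> Prop) :
  (forall k, exists F, refuted_on (As k) F) ->
  forall m, exists G, forall k, k < m -> refuted_on (As k) G.
Proof.
intros Hrefuted m; induction m as [|m [G HG]].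
- exists []; intros k Hk; lia.
- destruct (Hrefuted m) as [Fm HFm].
  exists (G ++ Fm). intros k Hk.
  destruct (Nat.eq_dec k m) as [->|Hne].
  + apply refuted_on_incl with Fm; [apply incl_appr, incl_refl | exact HFm].
  + apply refuted_on_incl with G; [apply incl_appl, incl_refl | apply HG; lia].
Qed.

(* If [x0] had no colour, every colour [k <= n] for [x0] would be refuted on
   some finite [F_k]; but the union of [x0] and these [F_k] has a good
   colouring, whose colour at [x0] is one of them. *)
Lemma maximal_extendable_total (A : X * nat -> Prop) :
  extendable A ->
  (forall B, (forall t, A t -> B t) -> extendable B -> forall t, B t -> A t) ->
  forall x, exists i, A (x, i).
Proof.
intros HA Hmax x0. apply NNPP; intro Hnone.
assert (Hrefuted : forall k, exists F, refuted_on (add_point A x0 k) F).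
{ intro k. apply NNPP; intro Hno. apply Hnone. exists k.
  apply (Hmax (add_point A x0 k)); [intros t; left; auto | | right; reflexivity].
  intro F. apply NNPP; intro HF. apply Hno. exists F.
  intros chi Hg Hagree. apply HF; eauto. }
destruct (refuted_on_common _ Hrefuted (S n)) as [G HG].
destruct (HA (x0 :: G)) as [chi [Hg Hagree]].
refine (HG (chi x0) _ chi _ _).
- assert (chi x0 <= n) by (apply (Good_bounded _ _ _ Hg); left; auto). lia.
- apply Good_incl with (x0 :: G); [intros x; right; auto | exact Hg].
- intros x i Hx [Ai|Heq].
  + apply Hagree; [right|]; auto.
  + injection Heq as -> ->; reflexivity.
Qed.

Theorem good_on_all_lists : exists chi, forall F, Good F chi.
Proof.
destruct (zorn_union (X * nat) extendable) as [A [HA Hmax]].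
{ intros Fam HFam Htot. apply union_extendable; auto. }
destruct (choice (fun x i => A (x, i)) (maximal_extendable_total A HA Hmax)) as [chi Hchi].
exists chi. intro F. destruct (HA F) as [chi' [Hg Hagree]].
apply (Good_local F chi'); [|exact Hg].
intros x Hx; apply Hagree; auto.
Qed.

End Compactness.

Lemma good_coloring_global {X : Type} (e d : entourage X) (n : nat) :
  (forall F, exists chi, good_coloring e d n F chi) ->
  exists chi, forall F, good_coloring e d n F chi.
Proof.
intro Hgood. apply good_on_all_lists with n; [| | | exact Hgood].
- intros F F' chi HF [Hb Hc]; split.
  + intros x Hx; apply Hb, HF, Hx.
  + intros C HC; apply Hc; intros x Hx; apply HF, HC, Hx.
- intros F chi chi' Heq [Hb Hc]; split.
  + intros x Hx; rewrite <- Heq; auto.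
  + intros C HC Hch Hm; apply Hc; auto. intros x y Hx Hy; rewrite !Heq; auto.
- intros F chi x [Hb _]; exact (Hb x).
Qed.

(* The cover consists of the monochrome [e2]-components; the members meeting
   [B(x, e)] are indexed by the colours of the points of that ball. *)
Lemma cover_of_global_coloring {X : Type} (e e2 d : entourage X) (n : nat) (chi : X -> nat)
    (e_sym : forall x y, e x y -> e y x)
    (e2_sym : forall x y, e2 x y -> e2 y x)
    (e2_comp : forall x y z, e x y -> e y z -> e2 x z)
    (chi_bounded : forall x, chi x <= n)
    (chi_chains : forall C, is_chain e2 C ->
       (forall x y, In x C -> In y C -> chi x = chi y) ->
       forall x y, In x C -> In y C -> d x y) :
  exists U, is_cover U /\ mesh_sub U d /\ forall x, meets_at_most U (ball x e) (S n).
Proof.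
set (step := fun u v => e2 u v /\ chi u = chi v).
set (comp := clos_refl_sym_trans X step).
assert (step_sym : forall u v, step u v -> step v u) by (intros u v [H1 H2]; split; auto).
assert (comp_chi : forall u v, comp u v -> chi u = chi v)
  by (induction 1 as [u v [_ H]| | |]; congruence).
exists (fun A => exists w, A = comp w). split; [|split].
- intro x. exists (comp x); split; [exists x; reflexivity | apply rst_refl].
- intros A [w ->] y z Hy Hz.
  assert (Hyz : comp y z) by (apply rst_trans with w; [apply rst_sym|]; assumption).
  destruct (clos_rst_chain X step step_sym y z Hyz) as [l [Hl Hzl]].
  apply (chi_chains (y :: l)); [| | left; reflexivity | exact Hzl].
  + apply is_chain_impl_in with step; [intros a b _ _ [Hab _]; exact Hab | exact Hl].
  + intros a b Ha Hb. apply comp_chi. apply (chain_clos_rst X step (y :: l)); auto.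
- intro x.
  exists (map (fun i z => exists y, e x y /\ chi y = i /\ comp y z) (seq 0 (S n))).
  split; [rewrite length_map, length_seq; reflexivity|].
  intros A [w ->] [y [Hwy Hxy]].
  exists (fun z => exists y', e x y' /\ chi y' = chi y /\ comp y' z). split.
  + apply (in_map (fun i z => exists y, e x y /\ chi y = i /\ comp y z)).
    apply in_seq. specialize (chi_bounded y). lia.
  + intro z; split.
    * intro Hwz. exists y; split; [exact Hxy | split; [reflexivity|]].
      apply rst_trans with w; [apply rst_sym|]; assumption.
    * intros [y' [Hxy' [Hc Hy'z]]].
      apply rst_trans with y; [exact Hwy|]. apply rst_trans with y'; [|exact Hy'z].
      apply rst_step; split; [apply e2_comp with x; auto | symmetry; exact Hc].
Qed.

Lemma asdim_le_of_chain_colorable {X : Type} (E : entourage X -> Prop) (n : nat) :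
  coarse_space X E -> chain_colorable E n -> asdim_le E n.
Proof.
intros cs Hcol. exists n; split; [lia|]. intros e He.
destruct (cs_comp _ _ cs e e He He) as [e2 [Ee2 He2]].
destruct (Hcol e2 Ee2) as [d [Ed Hgood]].
destruct (good_coloring_global e2 d n Hgood) as [chi Hchi].
destruct (cover_of_global_coloring e e2 d n chi) as [U [Hcov [Hmesh Hmult]]].
- apply (cs_sym _ _ cs); auto.
- apply (cs_sym _ _ cs); auto.
- exact He2.
- intro x; apply (proj1 (Hchi [x])); left; reflexivity.
- intros C; apply (proj2 (Hchi C)); auto.
- exists U; split; [exact Hcov | split; [exists d; split; auto | exact Hmult]].
Qed.

Theorem proposition2p5 :
  forall (X : Type) (E : entourage X -> Prop) (n : nat),
    coarse_space X E ->
    (asdim_le E n <->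
     forall e, E e ->
       exists d, E d /\
         forall F : list X,
           exists chi : X -> nat,
             (forall x, In x F -> chi x <= n) /\
             forall C : list X,
               (forall x, In x C -> In x F) ->
               is_chain e C ->
               (forall x y, In x C -> In y C -> chi x = chi y) ->
               forall x y, In x C -> In y C -> d x y).
Proof.
intros X E n cs. split.
- exact (chain_colorable_of_asdim_le X E cs n).
- exact (asdim_le_of_chain_colorable E n cs).
Qed.
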